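(* Let $n=2^k$ for some $k\in\mathbb{N}$. Then the path graph on $n$ nodes is reachable (observable) from any single node $i\in\{1,\dots,n\}$, i.e. the pair $(L_n,e_i)$ is reachable (and $(L_n,e_i^T)$ is observable) for every $i$.
   Context: The path graph on nodes $\{1,\dots,n\}$ has edges $\{i,i+1\}$; its Laplacian $L_n$ is tridiagonal with diagonal $(1,2,\dots,2,1)$ and off-diagonal entries $-1$. Reachability of $(L_n,e_i)$ means $[e_i|L_ne_i|\cdots|L_n^{n-1}e_i]$ has rank $n$. *)

From mathcomp Require Import all_boot all_order all_algebra.
Set Implicit Arguments. Unset Strict Implicit. Unset Printing Implicit Defensive.
Import Order.TTheory GRing.Theory Num.Theory.
Local Open Scope ring_scope.

(* Nodes 1..n of the paper are the ordinals 0..n-1 of 'I_n. *)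

(* Laplacian of the path graph with edges {i, i+1}:
   diagonal = degree (1 at the ends, 2 inside), -1 on the off-diagonals. *)
Definition path_laplacian (R : pzRingType) (n : nat) : 'M[R]_n :=
  \matrix_(i < n, j < n)
    if i == j then ((0 < i)%N + (i.+1 < n)%N)%:R
    else if (i.+1 == j)%N || (j.+1 == i)%N then -1 else 0.

Definition basis_col (R : pzRingType) (n : nat) (i : 'I_n) : 'cV[R]_n :=
  delta_mx i 0.

Definition reach_mx (R : pzRingType) (n : nat) (A : 'M[R]_n) (b : 'cV[R]_n)
  : 'M[R]_n :=
  \matrix_(r < n, c < n) (iter c (mulmx A) b) r 0.

Definition obs_mx (R : pzRingType) (n : nat) (A : 'M[R]_n) (c : 'rV[R]_n)
  : 'M[R]_n :=
  \matrix_(r < n, j < n) (iter r (fun v => v *m A) c) 0 j.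

Definition reachable (R : fieldType) (n : nat) (A : 'M[R]_n) (b : 'cV[R]_n) :=
  \rank (reach_mx A b) = n.

Definition observable (R : fieldType) (n : nat) (A : 'M[R]_n) (c : 'rV[R]_n) :=
  \rank (obs_mx A c) = n.

From mathcomp Require Import all_boot all_order all_algebra.
From mathcomp Require Import ring zify.
Import Order.TTheory GRing.Theory Num.Theory.
Local Open Scope ring_scope.

(* Reduce modulo 2.  Over a field of characteristic 2, extend a vector of
   length n to a function on Z invariant under the reflections j -> -1 - j and
   j -> 2n - 1 - j; on such functions L_n acts as u -> u(j - 1) + u(j + 1), and
   by the Frobenius identity its 2^k-th power is u -> u(j - 2^k) + u(j + 2^k).
   Such functions are 2n-periodic, so for n = 2^k we get L_n^n e_i = 0,
   while the 0-th entry of L_n^(n-1) e_i is the sum of the entries of e_i, i.e.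
   1.  Hence e_i, L_n e_i, ..., L_n^(n-1) e_i are independent mod 2, the integer
   Krylov determinant is odd, and so it is nonzero in characteristic 0.  The
   Laplacian being symmetric, observability is the transposed statement. *)

Lemma iter_mulmxE (R : pzRingType) n (A : 'M[R]_n) (b : 'cV_n) c :
  iter c (mulmx A) b = A ^+ c *m b.
Proof. by elim: c => [|c IH] /=; rewrite ?mul1mx // IH exprS -mulmxE mulmxA. Qed.

Lemma reach_mx_mul_col (R : comPzRingType) n (A : 'M[R]_n) (b w : 'cV_n) :
  reach_mx A b *m w = \sum_(c < n) w c 0 *: (A ^+ c *m b).
Proof.
apply/matrixP => r j; rewrite (ord1 j) mxE summxE; apply: eq_bigr => c _.
by rewrite [in RHS]mxE mxE iter_mulmxE mulrC.
Qed.

Lemma reach_mx_unitmx (F : fieldType) n (A : 'M[F]_n) (b : 'cV_n) :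
  A ^+ n *m b = 0 -> A ^+ n.-1 *m b != 0 -> reach_mx A b \in unitmx.
Proof.
move=> Anb An1b.
have Acb0 c : (n <= c)%N -> A ^+ c *m b = 0.
  by move=> /subnK <-; rewrite exprD -mulmxE -mulmxA Anb mulmx0.
rewrite -unitmx_tr -row_free_unit; apply: inj_row_free => v.
move=> /(congr1 trmx); rewrite trmx_mul trmxK trmx0 reach_mx_mul_col => vA0.
suff v0 (c : nat) (hc : (c < n)%N) : v^T (Ordinal hc) 0 = 0.
  by apply/matrixP => i [j hj]; rewrite ord1 mxE -(v0 j hj) mxE.
elim/ltn_ind: c hc => c IH hc.
(* Multiplying by A^(n-1-c) kills the terms above c and isolates the c-th. *)
have /eqP := congr1 (mulmx (A ^+ (n.-1 - c))) vA0.
rewrite mulmx0 mulmx_sumr (bigD1 (Ordinal hc)) //= big1 ?addr0.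
  rewrite -scalemxAr mulmxA mulmxE -exprD subnK; last by lia.
  by rewrite scalemx_eq0 (negPf An1b) orbF => /eqP.
move=> [c' hc'] /negP c'c /=; rewrite -scalemxAr mulmxA mulmxE -exprD.
case: (ltngtP c' c) => [c'_lt|c'_gt|c'_eq].
- by rewrite IH // scale0r.
- by rewrite Acb0 ?scaler0 //; lia.
- by case: c'c; apply/eqP/val_inj.
Qed.

Lemma obs_mx_trmx (R : comPzRingType) n (A : 'M[R]_n) (b : 'cV_n) :
  obs_mx A b^T = (reach_mx A^T b)^T.
Proof.
have iter_trmx r : iter r (mulmx^~ A) b^T = (iter r (mulmx A^T) b)^T.
  by elim: r => //= r ->; rewrite trmx_mul trmxK.
by apply/matrixP => r j; rewrite !mxE iter_trmx mxE.
Qed.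

Lemma reach_mx_map (aR rR : pzRingType) (f : {rmorphism aR -> rR}) n
    (A : 'M[aR]_n) (b : 'cV_n) :
  reach_mx (map_mx f A) (map_mx f b) = map_mx f (reach_mx A b).
Proof.
have iter_map c : iter c (mulmx (map_mx f A)) (map_mx f b) =
                  map_mx f (iter c (mulmx A) b).
  by elim: c => //= c ->; rewrite map_mxM.
by apply/matrixP => r c; rewrite !mxE iter_map mxE.
Qed.

Lemma path_laplacian_map (R : pzRingType) n :
  path_laplacian R n = map_mx intr (path_laplacian int n).
Proof.
apply/matrixP => i j; rewrite !mxE.
by case: ifP => _; [rewrite rmorph_nat | case: ifP => _; rewrite ?rmorphN1 ?rmorph0].
Qed.

Lemma basis_col_map (R : pzRingType) n (i : 'I_n) :
  basis_col R i = map_mx intr (basis_col int i).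
Proof. by rewrite /basis_col map_delta_mx. Qed.

Lemma trmx_path_laplacian (R : pzRingType) n :
  (path_laplacian R n)^T = path_laplacian R n.
Proof. by apply/matrixP => i j; rewrite !mxE eq_sym orbC; case: eqP => // ->. Qed.

Section PathLaplacianColumn.
Variables (R : pzRingType) (n : nat).

Lemma sum_ord_delta (f : nat -> R) m :
  \sum_(l < n) (l == m :> nat)%:R * f l = (m < n)%:R * f m.
Proof.
case: (ltnP m n) => [m_lt | m_ge].
  rewrite (bigD1 (Ordinal m_lt)) //= eqxx mul1r big1 ?addr0 ?mul1r // => l.
  by rewrite -val_eqE /= => /negPf ->; rewrite mul0r.
rewrite mul0r big1 // => l _; rewrite (_ : (l == m :> nat) = false) ?mul0r //.
by apply: contra_leqF m_ge => /eqP <-.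
Qed.

Lemma path_laplacianE (i l : 'I_n) : path_laplacian R n i l =
  (l == i :> nat)%:R * ((0 < i)%N + (i.+1 < n)%N)%:R
  - (l == i.+1 :> nat)%:R - (l.+1 == i :> nat)%:R.
Proof.
rewrite mxE; case: (eqVneq i l) => [<- | i_neq_l].
  by rewrite !eqxx mul1r (gtn_eqF (ltnSn i)) (ltn_eqF (ltnSn i)) !subr0.
have -> : (l == i :> nat) = false by rewrite val_eqE eq_sym (negPf i_neq_l).
rewrite mul0r sub0r.
have [->|_] := eqVneq (l : nat) i.+1; first by rewrite /= gtn_eqF ?subr0.
by case: (l.+1 == i :> nat); rewrite /= oppr0 ?sub0r ?addr0.
Qed.

Lemma path_laplacian_mul_col (f : nat -> R) (i : 'I_n) :
  (path_laplacian R n *m \col_(l < n) f l) i 0 =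
  (0 < i)%:R * (f i - f i.-1) + (i.+1 < n)%:R * (f i - f i.+1).
Proof.
have predE (l : 'I_n) : (l.+1 == i :> nat) = (0 < i)%N && (l == i.-1 :> nat).
  by case: (nat_of_ord i).
rewrite mxE.
under eq_bigr => l _ do
  rewrite path_laplacianE mxE predE -mulnb natrM !mulrBl -!mulrA.
rewrite !big_split /= !sumrN -mulr_sumr (sum_ord_delta (fun l => _ * f l)).
rewrite !sum_ord_delta ltn_ord.
rewrite (leq_ltn_trans (leq_pred i) (ltn_ord i)) !mul1r natrD mulrDl !mulrBr.
by rewrite addrAC (addrAC ((0 < i)%:R * f i)) -addrA.
Qed.

End PathLaplacianColumn.

Lemma sum_fold_reflection (V : nmodType) (u : int -> V) n :
    (forall j, u (-1 - j) = u j) ->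
  \sum_(s < n) u (1 - n%:Z + 2 * s%:Z) = \sum_(t < n) u t%:Z.
Proof.
move=> u_refl; elim/ltn_ind: n => -[|[|n]] IH; rewrite ?big_ord0 ?big_ord1 //.
rewrite big_ord_recr big_ord_recl /= [in RHS]big_ord_recr [in RHS]big_ord_recr /=.
rewrite -IH // (addrC (u _) (\sum_(i < n) _)); congr (_ + _ + _).
- by apply: eq_bigr => s _; congr u; rewrite /bump /=; lia.
- by rewrite -u_refl; congr u; lia.
- by congr u; lia.
Qed.

Section CharTwo.
Variable F : fieldType.
Hypothesis F_char2 : 2%:R = 0 :> F.

Lemma addrr_char2 (x : F) : x + x = 0.
Proof. by rewrite -mulr2n -mulr_natr F_char2 mulr0. Qed.

Lemma oppr_char2 (x : F) : - x = x.
Proof. by apply/eqP; rewrite eq_sym -subr_eq0 opprK addrr_char2. Qed.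

Definition adj_sum (u : int -> F) (j : int) : F := u (j - 1) + u (j + 1).

Lemma iter_adj_sum_pow2 k u j :
  iter (2 ^ k) adj_sum u j = u (j - (2 ^ k)%:Z) + u (j + (2 ^ k)%:Z).
Proof.
elim: k u j => [|k IH] u j //.
rewrite expnS mul2n -addnn iterD !IH subrK addrK -addrA (addrA (u j)) addrr_char2.
by rewrite add0r PoszD opprD !addrA.
Qed.

Lemma iter_adj_sum_pow2_pred k u j :
  iter (2 ^ k).-1 adj_sum u j =
  \sum_(s < 2 ^ k) u (j + 1 - (2 ^ k)%:Z + 2 * s%:Z).
Proof.
elim: k u j => [|k IH] u j; first by rewrite big_ord1 /=; congr u; lia.
have -> : (2 ^ k.+1).-1 = (2 ^ k + (2 ^ k).-1)%N.
  have : (0 < 2 ^ k)%N by rewrite expn_gt0.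
  by rewrite expnS mul2n -addnn; lia.
rewrite iterD iter_adj_sum_pow2 !IH expnS mul2n -addnn big_split_ord /=.
by congr (_ + _); apply: eq_bigr => s _; congr u; lia.
Qed.

Section Mirror.
Variable n : nat.

Definition mirror (u : int -> F) : Prop :=
  forall j, u (-1 - j) = u j /\ u (2 * n%:Z - 1 - j) = u j.

Lemma mirror_adj_sum u : mirror u -> mirror (adj_sum u).
Proof.
move=> mu j; rewrite /adj_sum; split.
  by rewrite -(mu (j - 1)).1 -(mu (j + 1)).1 [RHS]addrC; congr (u _ + u _); ring.
by rewrite -(mu (j - 1)).2 -(mu (j + 1)).2 [RHS]addrC; congr (u _ + u _); ring.
Qed.

Lemma mirror_iter_adj_sum m u : mirror u -> mirror (iter m adj_sum u).
Proof. by move=> mu; elim: m => //= m; apply: mirror_adj_sum. Qed.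

Lemma mirror_periodic u j : mirror u -> u (j + 2 * n%:Z) = u j.
Proof. by move=> mu; rewrite -[RHS](mu j).1 -(mu (-1 - j)).2; congr u; ring. Qed.

Lemma path_laplacian_mul_mirror u : mirror u ->
  path_laplacian F n *m \col_(l < n) u l%:Z = \col_(l < n) adj_sum u l%:Z.
Proof.
move=> mu; apply/matrixP => i j.
rewrite (ord1 j) (path_laplacian_mul_col _ _ (fun l : nat => u l%:Z)) mxE.
have lower : (0 < i)%:R * (u i%:Z - u i.-1%:Z) = u (i%:Z - 1) + u i%:Z.
  case: posnP => [-> | i_gt0]; last first.
    by rewrite mul1r oppr_char2 addrC; congr (u _ + _); lia.
  by rewrite mul0r (_ : 0%:Z - 1 = -1 - 0) ?(mu 0).1 ?addrr_char2.
have upper : (i.+1 < n)%:R * (u i%:Z - u i.+1%:Z) = u (i%:Z + 1) + u i%:Z.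
  case: ltnP => [_ | i_last].
    by rewrite mul1r oppr_char2 addrC; congr (u _ + _); lia.
  rewrite mul0r -(mu (i%:Z + 1)).2 (_ : _ - _ - _ = i%:Z) ?addrr_char2 //.
  by have := ltn_ord i; lia.
by rewrite lower upper addrACA addrr_char2 addr0.
Qed.

Lemma iter_path_laplacian_mirror m u : mirror u ->
  path_laplacian F n ^+ m *m \col_(l < n) u l%:Z =
  \col_(l < n) iter m adj_sum u l%:Z.
Proof.
move=> mu; rewrite -iter_mulmxE; elim: m => //= m ->.
exact/path_laplacian_mul_mirror/mirror_iter_adj_sum.
Qed.

Definition mirror_delta (i : nat) (j : int) : F :=
  (2 * n%:Z %| j - i%:Z)%Z%:R + (2 * n%:Z %| j + 1 + i%:Z)%Z%:R.

Lemma mirror_mirror_delta i : mirror (mirror_delta i).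
Proof.
have dvd_opp (d x : int) : (d %| - x)%Z = (d %| x)%Z by rewrite rpredN.
have dvd_sub (d x : int) : (d %| d - x)%Z = (d %| x)%Z.
  by rewrite rpredDl ?dvdzz // rpredN.
move=> j; rewrite /mirror_delta [RHS]addrC; split.
  rewrite (_ : -1 - j - i%:Z = - (j + 1 + i%:Z)); last ring.
  by rewrite (_ : -1 - j + 1 + i%:Z = - (j - i%:Z)) ?dvd_opp //; ring.
rewrite (_ : 2 * n%:Z - 1 - j - i%:Z = 2 * n%:Z - (j + 1 + i%:Z)); last ring.
by rewrite (_ : _ - 1 - j + 1 + _ = 2 * n%:Z - (j - i%:Z)) ?dvd_sub //; ring.
Qed.

Lemma mirror_delta_nat i t :
  (i < n)%N -> (t < n)%N -> mirror_delta i t%:Z = (t == i)%:R.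
Proof.
move=> i_lt t_lt; rewrite /mirror_delta.
have -> : (2 * n%:Z %| t%:Z + 1 + i%:Z)%Z = false.
  by apply/dvdzP => -[q q_eq]; have [q0|q0|q0] := ltrgtP q 0; nia.
suff -> : (2 * n%:Z %| t%:Z - i%:Z)%Z = (t == i) by rewrite addr0.
apply/dvdzP/eqP => [[q q_eq] | ->]; last by exists 0; rewrite subrr mul0r.
by have [q0|q0|q0] := ltrgtP q 0; [nia | nia | move: q_eq; rewrite q0 mul0r; lia].
Qed.

Lemma col_mirror_delta (i : 'I_n) :
  \col_(l < n) mirror_delta i l%:Z = basis_col F i.
Proof.
apply/matrixP => l j; rewrite (ord1 j) !mxE mirror_delta_nat ?ltn_ord //.
by rewrite val_eqE andbT.
Qed.

End Mirror.

Lemma path_laplacian_pow2_mul_basis k (i : 'I_(2 ^ k)) :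
  path_laplacian F (2 ^ k) ^+ (2 ^ k) *m basis_col F i = 0.
Proof.
rewrite -col_mirror_delta iter_path_laplacian_mirror; last exact: mirror_mirror_delta.
apply/matrixP => l j; rewrite !mxE iter_adj_sum_pow2.
rewrite -(mirror_periodic _ _ (l%:Z - (2 ^ k)%:Z) (mirror_mirror_delta _ i)).
by rewrite (_ : _ + 2 * _ = l%:Z + (2 ^ k)%:Z) ?addrr_char2 //; ring.
Qed.

Lemma path_laplacian_pow2_pred_mul_basis k (i : 'I_(2 ^ k)) :
  path_laplacian F (2 ^ k) ^+ (2 ^ k).-1 *m basis_col F i != 0.
Proof.
have n_gt0 : (0 < 2 ^ k)%N by rewrite expn_gt0.
rewrite -col_mirror_delta iter_path_laplacian_mirror; last exact: mirror_mirror_delta.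
apply/eqP => /matrixP /(_ (Ordinal n_gt0) 0); rewrite !mxE /= iter_adj_sum_pow2_pred.
under eq_bigr => s _ do rewrite add0r.
rewrite sum_fold_reflection; last by move=> j; have [] := mirror_mirror_delta (2 ^ k) i j.
rewrite (eq_bigr (fun t : 'I_(2 ^ k) => (t == i)%:R)); last first.
  by move=> t _; rewrite mirror_delta_nat ?ltn_ord // val_eqE.
rewrite (bigD1 i) //= eqxx big1 ?addr0 => [/eqP | t /negPf -> //].
by rewrite oner_eq0.
Qed.

End CharTwo.

Lemma path_reach_mx_unitmxE (F : fieldType) n (i : 'I_n) :
  (reach_mx (path_laplacian F n) (basis_col F i) \in unitmx) =
  ((\det (reach_mx (path_laplacian int n) (basis_col int i)))%:~R != 0 :> F).
Proof.
by rewrite path_laplacian_map basis_col_map reach_mx_map unitmxE det_map_mx unitfE.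
Qed.

Lemma path_reach_mx_det_neq0 k (i : 'I_(2 ^ k)) :
  \det (reach_mx (path_laplacian int (2 ^ k)) (basis_col int i)) != 0.
Proof.
have F2_char2 : 2%:R = 0 :> 'F_2 by apply/eqP.
have : reach_mx (path_laplacian 'F_2 (2 ^ k)) (basis_col 'F_2 i) \in unitmx.
  apply: reach_mx_unitmx.
  - exact: path_laplacian_pow2_mul_basis.
  - exact: path_laplacian_pow2_pred_mul_basis.
by rewrite path_reach_mx_unitmxE; apply: contra => /eqP ->.
Qed.

Lemma path_reach_mx_unitmx (F : numFieldType) k (i : 'I_(2 ^ k)) :
  reach_mx (path_laplacian F (2 ^ k)) (basis_col F i) \in unitmx.
Proof. by rewrite path_reach_mx_unitmxE intr_eq0 path_reach_mx_det_neq0. Qed.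

Theorem mainTheorem9 (R : realFieldType) (k : nat) (i : 'I_(2 ^ k)) :
  reachable (path_laplacian R (2 ^ k)) (basis_col R i) /\
  observable (path_laplacian R (2 ^ k)) (basis_col R i)^T.
Proof.
have reach_unit := path_reach_mx_unitmx R k i.
split; first exact: mxrank_unit.
by rewrite /observable obs_mx_trmx trmx_path_laplacian mxrank_tr mxrank_unit.
Qed.
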